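(* Let $D\ge 1$, $0<a<\tfrac12$, $N_0>0$, $P>0$, and $\sigma_{\mathrm{eff}}=\sqrt{N_0/P}$. For real $x$ let $x \bmod 1 \triangleq x-\lfloor x+\tfrac12\rfloor$, applied entrywise to vectors. For $t\in\mathbb{R}$ define the per-dimension distortion $$\delta(t)=\mathbb{E}_{n}\Big[\big([t+n]\bmod 1 - t\big)^2\Big],\qquad n\sim\mathcal{N}(0,\sigma_{\mathrm{eff}}^2),$$ and for $\mathbf{s}\in\mathbb{R}^D$ define $\delta(\mathbf{s})=\mathbb{E}_{\mathbf{n}}\big[\lVert[\mathbf{s}+\mathbf{n}]\bmod 1-\mathbf{s}\rVert^2\big]$ with $\mathbf{n}\sim\mathcal{N}(\mathbf{0},\sigma_{\mathrm{eff}}^2\mathbf{I}_D)$ (so $\delta(\mathbf{s})=\sum_{d=1}^D\delta(s_d)$). Then for every $\mathbf{s}=(s_1,\dots,s_D)\in[-a,a]^D$, $$D\,\delta(0)\le\delta(\mathbf{s})\le D\,\delta(a).$$ Moreover, for real numbers $s_d,s'_d\in[-a,a]$ with $|s'_d|<|s_d|$, one has $\delta(s'_d)<\delta(s_d)$.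
   Context: Interpretation: in the P$^2$-AirComp protocol, when the true sum equals $\mathbf{s}\in[-a,a]^D$, the server's estimate is $[\mathbf{s}+\mathbf{z}/\sqrt{P}]\bmod 1$ with channel noise $\mathbf{z}\sim\mathcal{N}(\mathbf{0},N_0\mathbf{I}_D)$, so $\delta(\mathbf{s})$ is its pointwise mean-square error; the bound holds for arbitrary distributions of the sum supported in $[-a,a]^D$. *)

From HB Require Import structures.
From mathcomp Require Import all_boot all_order all_algebra.
From mathcomp Require Import all_classical all_reals all_analysis.
Set Implicit Arguments. Unset Strict Implicit. Unset Printing Implicit Defensive.
Import Order.TTheory GRing.Theory Num.Theory.
Local Open Scope ring_scope.

Definition mod1 {R : realType} (x : R) : R := x - (Num.floor (x + 2^-1))%:~R.

Definition sigma_eff {R : realType} (N0 P : R) : R := Num.sqrt (N0 / P).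

Definition delta1 {R : realType} (sigma t : R) : \bar R :=
  (\int[normal_prob 0 sigma]_(n in [set: R]) ((mod1 (t + n) - t) ^+ 2)%:E)%E.

(* D-dimensional distortion, with i.i.d. N(0, sigma^2) noise per coordinate:
   the squared norm splits coordinatewise, so it is the sum of delta1. *)
Definition deltaD {R : realType} (D : nat) (sigma : R) (s : 'I_D -> R) : \bar R :=
  (\sum_(d < D) delta1 sigma (s d))%E.

From HB Require Import structures.
From mathcomp Require Import all_boot all_order all_algebra.
From mathcomp Require Import all_classical all_reals all_analysis.
From mathcomp Require Import measurable_realfun ring lra zify.
Import Order.TTheory GRing.Theory Num.Theory.
Local Open Scope ring_scope.

(* Writing k for the integer nearest to t + n, the error [t + n] mod 1 - t
   equals n - k: it is the representative of the noise n modulo 1 in the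
   window [-t - 1/2, -t + 1/2).  Sliding this window away from 0 can only
   increase the square of the representative, pointwise in n when the two
   windows lie on the same side of 0, and after the substitution n |-> -n,
   which preserves the centred Gaussian, when they lie on opposite sides.
   Strictness comes from a noise interval of positive Gaussian mass on which
   the nearest integer jumps, so that the squared error grows by a fixed
   amount. *)

Section shift_by_integer.
Context {R : realFieldType}.

Lemma sqr_le_sqr_addz (x y : R) (m : int) :
  y = x + m%:~R -> x <= 2^-1 -> y < x + 1 -> x ^+ 2 <= y ^+ 2.
Proof.
move=> -> x_le y_lt.
have [->|m_le] : m = 0 \/ (m <= -1)%R.
  by move: y_lt; rewrite ltrD2l -[1]/((1%:Z)%:~R : R) ltr_int; lia.
- by rewrite addr0.
- have : (m%:~R : R) <= -1 by rewrite -[-1]/((-1)%:~R : R) ler_int.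
  nra.
Qed.

Lemma sqr_le_sqr_addz_ge (x y : R) (m : int) :
  y = x + m%:~R -> - 2^-1 <= x -> x - 1 < y -> x ^+ 2 <= y ^+ 2.
Proof.
move=> y_def x_ge y_gt; rewrite -sqrrN -[y ^+ 2]sqrrN.
by apply: (sqr_le_sqr_addz _ _ (- m)); rewrite ?y_def ?intrN; lra.
Qed.

End shift_by_integer.

Section squared_error.
Context {R : realType}.
Implicit Types (t u v n x : R).

Definition round x : int := Num.floor (x + 2^-1).

Lemma round_itv x : (round x)%:~R - 2^-1 <= x < (round x)%:~R + 2^-1.
Proof.
by have := floor_itv (x + 2^-1); rewrite intrD => /andP[? ?]; apply/andP; split; lra.
Qed.

Lemma round_eq x (k : int) : k%:~R - 2^-1 <= x < k%:~R + 2^-1 -> round x = k.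
Proof.
by move=> /andP[? ?]; apply: floor_def; rewrite intrD; apply/andP; split; lra.
Qed.

Definition sqerr t n : R := (mod1 (t + n) - t) ^+ 2.

Lemma sqerrE t n : sqerr t n = (n - (round (t + n))%:~R) ^+ 2.
Proof. by rewrite /sqerr /mod1; congr (_ ^+ 2); rewrite /round; ring. Qed.

Lemma sqerrNN t n : sqerr (- t) (- n) = (n + (round (- (t + n)))%:~R) ^+ 2.
Proof. by rewrite sqerrE -(opprD t n) -sqrrN; congr (_ ^+ 2); ring. Qed.

Lemma sqerr_ub t n : sqerr t n <= (`|t| + 2^-1) ^+ 2.
Proof.
rewrite sqerrE; have /andP[? ?] := round_itv (t + n).
by have [t0|t0] := leP 0 t; [rewrite ger0_norm | rewrite ltr0_norm]; nra.
Qed.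

Lemma measurable_sqerr t : measurable_fun setT (sqerr t).
Proof.
have floor_nd : {homo (fun x : R => ((Num.floor x)%:~R : R)) : x y / x <= y}.
  by move=> x y xy; rewrite ler_int le_floor.
apply: measurable_funX; apply: measurable_funB => //.
apply: measurable_funB; first exact: measurable_funD.
apply: (measurableT_comp (nondecreasing_measurable measurableT floor_nd)).
by apply: measurable_funD => //; exact: measurable_funD.
Qed.

Lemma sqerr0_le t n : sqerr 0 n <= sqerr t n.
Proof.
rewrite !sqerrE add0r.
have /andP[? ?] := round_itv n; have /andP[? ?] := round_itv (t + n).
have [?|?] := ltP (n - (round (t + n))%:~R) (n - (round n)%:~R + 1).
  by apply: (sqr_le_sqr_addz _ _ (round n - round (t + n))); rewrite ?intrB; lra.
by apply: (sqr_le_sqr_addz_ge _ _ (round n - round (t + n))); rewrite ?intrB; lra.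
Qed.

Lemma sqerr_le u v n : 0 <= u <= v -> sqerr u n <= sqerr v n.
Proof.
move=> /andP[? ?]; rewrite !sqerrE.
have /andP[? ?] := round_itv (u + n); have /andP[? ?] := round_itv (v + n).
by apply: (sqr_le_sqr_addz _ _ (round (u + n) - round (v + n))); rewrite ?intrB; lra.
Qed.

Lemma sqerr_le_sqerrNN u v n : 0 <= u < v -> sqerr u n <= sqerr (- v) (- n).
Proof.
move=> /andP[? ?]; rewrite sqerrE sqerrNN.
have /andP[? ?] := round_itv (u + n); have /andP[? ?] := round_itv (- (v + n)).
apply: (sqr_le_sqr_addz _ _ (round (u + n) + round (- (v + n)))).
all: by rewrite ?intrD; lra.
Qed.

Lemma sqerr_nonpos_le_sqerrNN u n : u <= 0 -> sqerr u n <= sqerr (- u) (- n).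
Proof.
move=> ?; rewrite sqerrE sqerrNN.
have /andP[? ?] := round_itv (u + n); have /andP[? ?] := round_itv (- (u + n)).
apply: (sqr_le_sqr_addz_ge _ _ (round (u + n) + round (- (u + n)))).
all: by rewrite ?intrD; lra.
Qed.

Lemma sqerr_gap u v n : 0 <= u < v -> v <= u + 1 ->
  2^-1 - v <= n <= 2^-1 - (u + v) / 2 -> sqerr u n + (u + v) <= sqerr v n.
Proof.
move=> /andP[? ?] ? /andP[? ?]; rewrite !sqerrE.
rewrite (@round_eq (u + n) 0) ?(@round_eq (v + n) 1) /=; try by apply/andP; split; lra.
nra.
Qed.

End squared_error.

Section integral_gap.
Local Open Scope ereal_scope.
Context d (T : measurableType d) (R : realType) (mu : {measure set T -> \bar R}).

Lemma lt_integral_gap (f g : T -> R) (A : set T) (c : R) :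
  measurable A -> measurable_fun setT f -> measurable_fun setT g ->
  (forall x, 0 <= f x)%R -> (forall x, f x <= g x)%R -> (0 < c)%R ->
  (forall x, A x -> f x + c <= g x)%R -> 0 < mu A ->
  \int[mu]_x (f x)%:E \is a fin_num ->
  \int[mu]_x (f x)%:E < \int[mu]_x (g x)%:E.
Proof.
move=> mA mf mg f_ge0 f_le_g c_gt0 gap muA_gt0 f_fin.
have cA_ge0 x : (0 <= c * \1_A x)%R by rewrite mulr_ge0 ?(ltW c_gt0) // indicE.
have mcA : measurable_fun setT (fun x => c * \1_A x)%R.
  by apply: measurable_funM => //; exact: measurable_indic.
apply: (@lt_le_trans _ _ (\int[mu]_x (f x + c * \1_A x)%:E)).
  rewrite [ltRHS](eq_integral (fun x => (f x)%:E + (c * \1_A x)%:E)) //.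
  rewrite ge0_integralD //; try by move=> x _; rewrite lee_fin.
  - rewrite [X in _ < _ + X](eq_integral (fun x => c%:E * (\1_A x)%:E)) //.
    rewrite ge0_integralZl_EFin ?(ltW c_gt0) //.
    - by rewrite integral_indic // setIT lteDl // mule_gt0 ?lte_fin.
    - exact/measurable_EFinP/measurable_indic.
  - exact/measurable_EFinP.
  - exact/measurable_EFinP.
apply: ge0_le_integral => //.
- by move=> x _; rewrite lee_fin addr_ge0.
- exact/measurable_EFinP/measurable_funD.
- exact/measurable_EFinP.
move=> x _; rewrite lee_fin indicE.
by have [/[!inE] /gap|] := boolP (x \in A); rewrite ?mulr1 ?mulr0 ?addr0.
Qed.

End integral_gap.

Section centred_normal.
Context {R : realType} {sigma : R}.
(* For sigma = 0, normal_pdf is the junk density of the uniform law on [0, 1],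
   which is not symmetric. *)
Hypothesis sigma_neq0 : sigma != 0.
Local Notation N := (normal_prob 0 sigma).
Local Notation mu := (@lebesgue_measure R).

Lemma normal_prob_itv_gt0 (l r : R) : l < r -> (0 < N `[l, r])%E.
Proof.
move=> lr.
set m := normal_peak sigma * expR (- (l ^+ 2 + r ^+ 2) / (sigma ^+ 2 *+ 2)).
have m_gt0 : 0 < m by rewrite mulr_gt0 ?expR_gt0 ?normal_peak_gt0.
apply: (@lt_le_trans _ _ (\int[mu]_(x in `[l, r]) cst m%:E x)%E).
  rewrite integral_cst //= lebesgue_measure_itv /= lte_fin lr -EFinD -EFinM.
  by rewrite lte_fin mulr_gt0 // subr_gt0.
apply: ge0_le_integral => //.
- by move=> x _; rewrite lee_fin ltW.
- by apply/measurable_EFinP; apply: measurable_funTS; exact: measurable_normal_pdf.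
move=> x /=; rewrite in_itv /= => /andP[lx xr].
rewrite lee_fin normal_pdfE // /m /normal_fun ler_wpM2l ?normal_peak_ge0 //.
rewrite ler_expR subr0.
rewrite !mulNr lerN2 ler_wpM2r ?invr_ge0 ?mulrn_wge0 ?sqr_ge0 //.
have sqr_le (y : R) : l <= y -> y <= r -> y ^+ 2 <= l ^+ 2 + r ^+ 2.
  by move=> ? ?; have [y_ge0|y_lt0] := leP 0 y; nra.
exact: sqr_le.
Qed.

Lemma normal_prob_oppr (A : set R) : measurable A -> N (-%R @^-1` A) = N A.
Proof.
move=> mA; rewrite /normal_prob.
have mN : measurable_fun setT (-%R : measurableTypeR R -> measurableTypeR R).
  exact: oppr_measurable.
transitivity
  (\int[mu]_(x in -%R @^-1` A) ((EFin \o normal_pdf 0 sigma) \o -%R) x)%E.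
  by apply: eq_integral => x _ /=; rewrite normal_pdfE // /normal_fun !subr0 sqrrN.
rewrite -(ge0_integral_pushforward mN) //.
- by apply: eq_measure_integral => B mB _ /=; rewrite lebesgue_measureN.
- by apply/measurable_EFinP; apply: measurable_funTS; exact: measurable_normal_pdf.
- by move=> y _; rewrite lee_fin normal_pdf_ge0.
Qed.

Lemma ge0_integral_normal_prob_oppr (g : R -> R) :
  measurable_fun setT g -> (forall x, 0 <= g x) ->
  (\int[N]_x (g (- x))%:E = \int[N]_x (g x)%:E)%E.
Proof.
move=> mg g_ge0.
have mN : measurable_fun setT (-%R : measurableTypeR R -> measurableTypeR R).
  exact: oppr_measurable.
transitivity (\int[N]_(x in -%R @^-1` setT) ((EFin \o g) \o -%R) x)%E => //.
rewrite -(ge0_integral_pushforward mN) //.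
- by apply: eq_measure_integral => B mB _ /=; rewrite /pushforward normal_prob_oppr.
- exact/measurable_EFinP.
- by move=> y _; rewrite lee_fin.
Qed.

End centred_normal.

Section distortion.
Context {R : realType} (sigma : R).
Hypothesis sigma_neq0 : sigma != 0.
Local Notation delta := (delta1 sigma).
Implicit Types (t u v : R).

Lemma delta1E t : delta t = (\int[normal_prob 0 sigma]_n (sqerr t n)%:E)%E.
Proof. by []. Qed.

Lemma delta1_fin_num t : delta t \is a fin_num.
Proof.
rewrite delta1E ge0_fin_numE;
  last by apply: integral_ge0 => n _; rewrite lee_fin sqr_ge0.
set b := ((`|t| + 2^-1) ^+ 2)%:E.
apply: (@le_lt_trans _ _ (\int[normal_prob 0 sigma]_n cst b n)%E).
  apply: ge0_le_integral => //.
  - by move=> n _; rewrite lee_fin sqr_ge0.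
  - by apply/measurable_EFinP; exact: measurable_sqerr.
  - by move=> n _; rewrite lee_fin sqerr_ub.
by rewrite integral_cst //= probability_setT mule1 ltry.
Qed.

Lemma delta1_le_of_sqerr u v :
  (forall n, sqerr u n <= sqerr v n) -> (delta u <= delta v)%E.
Proof.
move=> uv; rewrite !delta1E; apply: ge0_le_integral => //.
- by move=> n _; rewrite lee_fin sqr_ge0.
- by apply/measurable_EFinP; exact: measurable_sqerr.
- by apply/measurable_EFinP; exact: measurable_sqerr.
- by move=> n _; rewrite lee_fin.
Qed.

Lemma delta1_le_of_sqerrN u v :
  (forall n, sqerr u n <= sqerr v (- n)) -> (delta u <= delta v)%E.
Proof.
move=> uv; rewrite !delta1E.
rewrite -[leRHS](ge0_integral_normal_prob_oppr sigma_neq0 _ (measurable_sqerr v));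
  last by move=> n; exact: sqr_ge0.
apply: ge0_le_integral => //.
- by move=> n _; rewrite lee_fin sqr_ge0.
- by apply/measurable_EFinP; exact: measurable_sqerr.
- apply/measurable_EFinP; apply: measurableT_comp; first exact: measurable_sqerr.
  exact: oppr_measurable.
- by move=> n _; rewrite lee_fin.
Qed.

Lemma delta1_0_le t : (delta 0 <= delta t)%E.
Proof. by apply: delta1_le_of_sqerr => n; exact: sqerr0_le. Qed.

Lemma delta1_le u v : 0 <= u <= v -> (delta u <= delta v)%E.
Proof. by move=> uv; apply: delta1_le_of_sqerr => n; exact: sqerr_le. Qed.

Lemma delta1_le_opp u v : 0 <= u < v -> (delta u <= delta (- v))%E.
Proof.
by move=> uv; apply: delta1_le_of_sqerrN => n; exact: sqerr_le_sqerrNN.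
Qed.

Lemma delta1_nonpos_le_opp u : u <= 0 -> (delta u <= delta (- u))%E.
Proof.
by move=> u_le0; apply: delta1_le_of_sqerrN => n; exact: sqerr_nonpos_le_sqerrNN.
Qed.

Lemma delta1_lt u v : 0 <= u < v -> v <= u + 1 -> (delta u < delta v)%E.
Proof.
move=> /andP[u_ge0 uv] vu1; rewrite !delta1E.
apply: (@lt_integral_gap _ _ _ (normal_prob 0 sigma) (sqerr u) (sqerr v)
  `[2^-1 - v, 2^-1 - (u + v) / 2] (u + v)) => //.
- exact: measurable_sqerr.
- exact: measurable_sqerr.
- by move=> n; exact: sqr_ge0.
- by move=> n; apply: sqerr_le; rewrite u_ge0 ltW.
- lra.
- by move=> n /=; rewrite in_itv /=; apply: sqerr_gap => //; rewrite u_ge0.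
- by apply: normal_prob_itv_gt0 => //; lra.
- exact: delta1_fin_num.
Qed.

Lemma delta1_lt_norm u v : `|u| < `|v| -> `|v| <= 1 -> (delta u < delta v)%E.
Proof.
wlog u_ge0 : u / 0 <= u => [hwlog|].
  have [|u_lt0] := leP 0 u; first exact: hwlog.
  move=> uv v1; apply: (le_lt_trans (delta1_nonpos_le_opp _ (ltW u_lt0))).
  by apply: hwlog; rewrite ?normrN ?oppr_ge0 ?(ltW u_lt0).
rewrite (ger0_norm u_ge0); have [v_ge0|v_lt0] := leP 0 v.
  rewrite ger0_norm // => uv v1; apply: delta1_lt; lra.
rewrite ltr0_norm // => uv v1.
apply: (@lt_le_trans _ _ (delta ((u - v) / 2))).
  by apply: delta1_lt; lra.
by rewrite -[v]opprK; apply: delta1_le_opp; lra.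
Qed.

Lemma delta1_le_bound a t : - a <= t <= a -> (delta t <= delta a)%E.
Proof.
move=> /andP[a_le_t t_le_a]; have [t_ge0|t_lt0] := leP 0 t.
  by apply: delta1_le; rewrite t_ge0.
apply: (le_trans (delta1_nonpos_le_opp _ (ltW t_lt0))).
by apply: delta1_le; lra.
Qed.

End distortion.

Theorem theorem3 (R : realType) (D : nat) (a N0 P : R) :
  (1 <= D)%N -> 0 < a -> a < 2^-1 -> 0 < N0 -> 0 < P ->
  (forall s : 'I_D -> R, (forall d, -a <= s d <= a) ->
     ((D%:R)%:E * delta1 (sigma_eff N0 P) 0 <= deltaD (sigma_eff N0 P) s)%E /\
     (deltaD (sigma_eff N0 P) s <= (D%:R)%:E * delta1 (sigma_eff N0 P) a)%E) /\
  (forall s s' : R, -a <= s <= a -> -a <= s' <= a -> `|s'| < `|s| ->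
     (delta1 (sigma_eff N0 P) s' < delta1 (sigma_eff N0 P) s)%E).
Proof.
move=> _ a_gt0 a_lt_half N0_gt0 P_gt0.
have sigma_neq0 : sigma_eff N0 P != 0.
  by rewrite gt_eqF // sqrtr_gt0 divr_gt0.
have sum_const (x : \bar R) : (\sum_(d < D) x)%E = (x *+ D)%E.
  by rewrite sumr_const card_ord.
split=> [s s_bound | s s' /andP[Na_le_s s_le_a] _ lt_abs].
  rewrite /deltaD !mule_natl -!sum_const.
  by split; apply: lee_sum => d _; [exact: delta1_0_le | exact: delta1_le_bound].
by apply: delta1_lt_norm => //; rewrite ler_norml; apply/andP; split; lra.
Qed.
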